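(* Let $G\in\mathcal{G}_{k,n,p}$ and $v,w\in V(G)$. Then $H_{wv}\lesssim (pn)^k$.
   Context: Fix an integer $k\ge2$ and let $p=p(n)$ satisfy $\frac{\log n}{n^{(k-1)/k}}\le p\le 1-\Omega(\frac{\log^4 n}{n})$. $\mathcal{G}_{k,n,p}$ denotes the set of graphs $G$ on $n$ vertices satisfying: (i) $G$ is not bipartite; (ii) $\operatorname{diam}(G)\le k$; (iii) every vertex has degree $d(v)=pn\pm\mathcal{O}(\sqrt{pn\log n})$; (iv) $2|E(G)|=pn^2\pm\mathcal{O}(\sqrt{pn^2\log n})$; (v) $|N(v)\cap N(w)|=p^2n\pm\mathcal{O}(\max\{\sqrt{p^2n\log n},\log n\})$ for all $v\ne w$; (vi) the unit eigenvector $\phi$ of the largest adjacency eigenvalue has entries $\phi_i=\frac1{\sqrt n}\pm\mathcal{O}(\frac{\log^{3/2}n}{\sqrt p\,n\log(pn)})$; (vii) $\lambda_1=(1+o(1))pn$; (viii) $\max\{|\lambda_2|,|\lambda_n|\}=\mathcal{O}(\sqrt{pn})$, where $\lambda_1\ge\dots\ge\lambda_n$ are the adjacency eigenvalues. Asymptotic notation is as $n\to\infty$ with constants independent of $n$; $f\lesssim g$ means $f=\mathcal{O}(g)$. $H_{wv}$ is the expected first hitting time of $v$ for a simple random walk on $G$ started at $w$. *)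

From HB Require Import structures.
From mathcomp Require Import all_boot all_order all_algebra.
From mathcomp Require Import all_classical all_reals all_analysis.
Set Implicit Arguments. Unset Strict Implicit. Unset Printing Implicit Defensive.
Import Order.TTheory GRing.Theory Num.Theory.
Local Open Scope ring_scope.

Section GraphDefs.
Variable R : realType.
Variable n : nat.
Variable e : rel 'I_n.

Definition simple_graph : Prop := symmetric e /\ irreflexive e.

Definition deg (x : 'I_n) : nat := #|[set y | e x y]|.

Definition nedges : nat := #|[set q : 'I_n * 'I_n | (q.1 < q.2)%N && e q.1 q.2]|.

Definition codeg (x y : 'I_n) : nat := #|[set u | e x u && e y u]|.

Definition bipartite : Prop :=
  exists f : 'I_n -> bool, forall x y, e x y -> f x != f y.

Definition diam_le (k : nat) : Prop :=
  forall x y : 'I_n, exists s : seq 'I_n,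
    [/\ path e x s, last x s = y & (size s <= k)%N].

Definition adj : 'M[R]_n := \matrix_(i, j) (e i j)%:R.

Definition adj_spectrum (lam : nat -> R) : Prop :=
  char_poly adj = \prod_(i < n) ('X - (lam i)%:P) /\
  (forall i j : nat, (i <= j)%N -> (j < n)%N -> lam j <= lam i).

Definition trans (x y : 'I_n) : R := if e x y then (deg x)%:R^-1 else 0.

(* P_w(T_v = t): probability that the walk started at w first hits v at time t *)
Definition first_hit_prob (w v : 'I_n) (t : nat) : R :=
  \sum_(s : (t.+1).-tuple 'I_n |
          [&& nth w s 0 == w, nth w s t == v & [forall i : 'I_t, nth w s i != v]])
     \prod_(i < t) trans (nth w s i) (nth w s i.+1).

Definition hitting_time (w v : 'I_n) : \bar R :=
  (\sum_(0 <= t <oo) ((t%:R * first_hit_prob w v t)%:E))%E.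

(* Membership in G_{k,n,p}; every O(.) is made explicit with the constant C0,
   and the o(1) in (vii) is the given sequence eps. *)
Definition in_class (k : nat) (p C0 : R) (eps : nat -> R) : Prop :=
  let nR := (n%:R : R) in
  [/\ ~ bipartite /\ diam_le k,
      (forall x, `|(deg x)%:R - p * nR| <= C0 * Num.sqrt (p * nR * ln nR)),
      `|(2 * nedges)%:R - p * nR ^+ 2| <= C0 * Num.sqrt (p * nR ^+ 2 * ln nR),
      (forall x y, x != y ->
         `|(codeg x y)%:R - p ^+ 2 * nR| <=
           C0 * Num.max (Num.sqrt (p ^+ 2 * nR * ln nR)) (ln nR)) &
      exists lam : nat -> R,
      [/\ adj_spectrum lam,
          (exists phi : 'cV[R]_n,
             [/\ adj *m phi = lam 0%N *: phi,
                 \sum_i phi i 0 ^+ 2 = 1 &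
                 forall i, `|phi i 0 - (Num.sqrt nR)^-1| <=
                   C0 * (powR (ln nR) (3 / 2) / (Num.sqrt p * nR * ln (p * nR)))]),
          `|lam 0%N - p * nR| <= `|eps n| * (p * nR) &
          Num.max `|lam 1%N| `|lam n.-1| <= C0 * Num.sqrt (p * nR)]].

End GraphDefs.

From HB Require Import structures.
From mathcomp Require Import all_boot all_order all_algebra.
From mathcomp Require Import all_classical all_reals all_analysis.
From mathcomp Require Import ring lra.
Import Order.TTheory GRing.Theory Num.Theory.
Local Open Scope ring_scope.

(* If every vertex has degree at most D and lies within distance k of v, then
   from any vertex the walk follows a fixed path of length <= k to v with
   probability at least D^-k, so P(T_v >= t) shrinks by a factor 1 - D^-k
   every k + 1 steps and H_wv = sum_t P(T_v > t) <= (k + 1) D^k.  For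
   G in G_{k,n,p} one may take D = (1 + C0) pn, because pn >= log n makes the
   error term C0 sqrt(pn log n) of the degrees at most C0 pn. *)

Lemma sum_ord_widen_le {R : numDomainType} (F : nat -> R) m m' :
  (forall i, 0 <= F i) -> (m <= m')%N ->
  \sum_(i < m) F i <= \sum_(i < m') F i.
Proof.
move=> F_ge0 le_mm'; rewrite -(subnKC le_mm') big_split_ord /= lerDl.
by apply: sumr_ge0 => i _.
Qed.

Lemma ler_sum_term {R : numDomainType} {I : finType} (F : I -> R) i :
  (forall j, 0 <= F j) -> F i <= \sum_j F j.
Proof.
by move=> F_ge0; rewrite (bigD1 i) //= lerDl; apply: sumr_ge0 => j _.
Qed.

Section KilledWalk.
Context (R : realType) {n : nat} (e : rel 'I_n) (v : 'I_n).

Definition killed_step (f : 'I_n -> R) (x : 'I_n) : R :=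
  if x != v then \sum_y trans R e x y * f y else 0.

(* [survival t x] is P_x(T_v >= t) and [hit_at t x] is P_x(T_v = t). *)
Definition survival t := iter t killed_step (fun=> 1).
Definition hit_at t := iter t killed_step (fun y => (y == v)%:R).

Lemma trans_ge0 x y : 0 <= trans R e x y.
Proof. by rewrite /trans; case: (e x y). Qed.

Lemma killed_step_ge0 f x : (forall y, 0 <= f y) -> 0 <= killed_step f x.
Proof.
move=> f_ge0; rewrite /killed_step; case: (x != v) => //.
by apply: sumr_ge0 => y _; rewrite mulr_ge0 ?trans_ge0.
Qed.

Lemma killed_step_le f h x :
  (forall y, f y <= h y) -> killed_step f x <= killed_step h x.
Proof.
move=> le_fh; rewrite /killed_step; case: (x != v) => //.
by apply: ler_sum => y _; rewrite ler_wpM2l ?trans_ge0.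
Qed.

Lemma killed_stepZ c f :
  killed_step (fun y => c * f y) = (fun y => c * killed_step f y).
Proof.
apply: funext => x; rewrite /killed_step; case: (x != v); last by rewrite mulr0.
by rewrite mulr_sumr; apply: eq_bigr => y _; rewrite mulrCA.
Qed.

Lemma killed_stepB f h :
  killed_step (fun y => f y - h y) = (fun y => killed_step f y - killed_step h y).
Proof.
apply: funext => x; rewrite /killed_step; case: (x != v); last by rewrite subr0.
by rewrite -sumrB; apply: eq_bigr => y _; rewrite mulrBr.
Qed.

Lemma iter_killed_step_ge0 t f :
  (forall y, 0 <= f y) -> forall y, 0 <= iter t killed_step f y.
Proof. by move=> f_ge0; elim: t => [|t IH] y //=; apply: killed_step_ge0. Qed.

Lemma iter_killed_step_le t f h :
  (forall y, f y <= h y) -> forall y, iter t killed_step f y <= iter t killed_step h y.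
Proof. by move=> le_fh; elim: t => [|t IH] y //=; apply: killed_step_le. Qed.

Lemma iter_killed_stepZ t c f :
  iter t killed_step (fun y => c * f y) = (fun y => c * iter t killed_step f y).
Proof. by elim: t => [|t IH] //=; rewrite IH killed_stepZ. Qed.

Lemma survival_ge0 t x : 0 <= survival t x.
Proof. exact: iter_killed_step_ge0. Qed.

Lemma hit_at_ge0 t x : 0 <= hit_at t x.
Proof. by apply: iter_killed_step_ge0 => y; rewrite ler0n. Qed.

Variable k : nat.
Hypothesis reach_v :
  forall x, exists s, [/\ path e x s, last x s = v & (size s <= k)%N].

Lemma deg_gt0 x : x != v -> (0 < deg e x)%N.
Proof.
have [[|y s] [/= xs last_s _]] := reach_v x; first by rewrite last_s eqxx.
by move=> _; apply/card_gt0P; exists y; rewrite inE; case/andP: xs.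
Qed.

Lemma sum_trans x : x != v -> \sum_y trans R e x y = 1.
Proof.
move=> xv.
have -> : \sum_y trans R e x y = \sum_(y in [set y | e x y]) (deg e x)%:R^-1.
  by rewrite [RHS]big_mkcond; apply: eq_bigr => y _; rewrite inE /trans.
rewrite sumr_const -[#|_|]/(deg e x) -[_ *+ deg e x]mulr_natr mulVf //.
by rewrite pnatr_eq0 -lt0n deg_gt0.
Qed.

Lemma killed_step1 x : killed_step (fun=> 1) x = (x != v)%:R.
Proof.
rewrite /killed_step; case: eqP => [//|/eqP xv].
by under eq_bigr do rewrite mulr1; rewrite sum_trans.
Qed.

Lemma hit_atE t x : hit_at t x = survival t x - survival t.+1 x.
Proof.
suff -> : hit_at t = (fun y => survival t y - survival t.+1 y) by [].
elim: t => [|t IH].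
  by apply: funext => y; rewrite /= killed_step1; case: (y == v); rewrite ?subr0 ?subrr.
by rewrite [hit_at _]/= IH killed_stepB.
Qed.

Lemma sum_hit_at t x : \sum_(i < t) hit_at i x = 1 - survival t x.
Proof.
elim: t => [|t IH]; first by rewrite big_ord0 subrr.
by rewrite big_ord_recr /= IH hit_atE addrA subrK.
Qed.

Lemma survival_le1 t x : survival t x <= 1.
Proof.
have : 0 <= \sum_(i < t) hit_at i x by apply: sumr_ge0 => i _; apply: hit_at_ge0.
by rewrite sum_hit_at subr_ge0.
Qed.

Variable D : R.
Hypotheses (D_ge1 : 1 <= D) (deg_le : forall x, (deg e x)%:R <= D).

Let D_gt0 : 0 < D. Proof. exact: lt_le_trans ltr01 D_ge1. Qed.
Let invD_ge0 : 0 <= D^-1. Proof. by rewrite invr_ge0 ltW. Qed.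
Let invD_le1 : D^-1 <= 1. Proof. by rewrite invf_le1. Qed.

Lemma trans_ge x y : e x y -> D^-1 <= trans R e x y.
Proof.
move=> exy; rewrite /trans exy lef_pV2 ?posrE ?ltr0n //.
by apply/card_gt0P; exists y; rewrite inE.
Qed.

Lemma hit_atS t x :
  x != v -> hit_at t.+1 x = \sum_y trans R e x y * hit_at t y.
Proof. by rewrite /hit_at /= /killed_step => ->. Qed.

Lemma hit_at_path s x : path e x s -> last x s = v ->
  D^-1 ^+ size s <= \sum_(i < (size s).+1) hit_at i x.
Proof.
elim: s x => [|y s IH] x /=.
  by move=> _ ->; rewrite big_ord1 /hit_at /= eqxx expr0.
move=> /andP[exy ys] last_s; rewrite big_ord_recl.
have [->|xv] := eqVneq x v.
  have -> : hit_at 0 v = 1 by rewrite /hit_at /= eqxx.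
  apply: le_trans (_ : 1 <= _); first exact: exprn_ile1.
  by rewrite lerDl; apply: sumr_ge0 => i _; apply: hit_at_ge0.
have via_y i : trans R e x y * hit_at i y <= hit_at i.+1 x.
  rewrite hit_atS //; apply: (ler_sum_term (fun z => trans R e x z * hit_at i z)).
  by move=> z; rewrite mulr_ge0 ?trans_ge0 ?hit_at_ge0.
have -> : hit_at 0 x = 0 by rewrite /hit_at /= (negbTE xv).
rewrite add0r.
apply: le_trans (_ : trans R e x y * \sum_(i < (size s).+1) hit_at i y <= _).
  by rewrite exprS ler_pM ?exprn_ge0 ?trans_ge ?IH.
by rewrite mulr_sumr; apply: ler_sum => i _; rewrite lift0.
Qed.

Let q := D^-1 ^+ k.

Let q_gt0 : 0 < q. Proof. by rewrite exprn_gt0 ?invr_gt0. Qed.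
Let q_le1 : q <= 1. Proof. exact: exprn_ile1. Qed.

Lemma survival_reach x : survival k.+1 x <= 1 - q.
Proof.
have [s [xs last_s size_s]] := reach_v x.
suff : q <= \sum_(i < k.+1) hit_at i x by rewrite sum_hit_at; lra.
apply: le_trans (_ : D^-1 ^+ size s <= _); first exact: ler_wiXn2l.
apply: le_trans (hit_at_path s x xs last_s) _.
by apply: (sum_ord_widen_le (fun i => hit_at i x)) => // i; apply: hit_at_ge0.
Qed.

Lemma survival_shift t x : survival (t + k.+1) x <= (1 - q) * survival t x.
Proof.
rewrite /survival iterD.
have -> : (1 - q) * iter t killed_step (fun=> 1) x =
    iter t killed_step (fun=> (1 - q) * 1) x by rewrite iter_killed_stepZ.
by apply: iter_killed_step_le => y; rewrite mulr1 survival_reach.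
Qed.

Lemma sum_survival j x : \sum_(i < j * k.+1) survival i x <= k.+1%:R / q.
Proof.
elim: j => [|j IH]; first by rewrite big_ord0 divr_ge0 // ltW.
rewrite mulSn big_split_ord.
have first_block : \sum_(i < k.+1) survival (lshift (j * k.+1) i) x <= k.+1%:R.
  apply: le_trans (_ : \sum_(i < k.+1) (1 : R) <= _).
    by apply: ler_sum => i _; apply: survival_le1.
  by rewrite sumr_const card_ord.
have later_blocks : \sum_(i < j * k.+1) survival (rshift k.+1 i) x <=
    (1 - q) * (k.+1%:R / q).
  apply: le_trans (_ : (1 - q) * \sum_(i < j * k.+1) survival i x <= _).
    rewrite mulr_sumr; apply: ler_sum => i _.
    by have := survival_shift i x; rewrite [(i + _)%N]addnC.
  by apply: ler_wpM2l; rewrite ?subr_ge0.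
have -> : k.+1%:R / q = k.+1%:R + (1 - q) * (k.+1%:R / q).
  by field; rewrite gt_eqF.
exact: lerD first_block later_blocks.
Qed.

Lemma sum_mul_hit_atE N x : \sum_(i < N) i%:R * hit_at i x + N%:R * survival N x =
  \sum_(i < N) survival i.+1 x.
Proof.
elim: N => [|N IH]; first by rewrite !big_ord0 mul0r addr0.
rewrite !big_ord_recr /= -IH hit_atE.
have -> : survival N.+1 x = killed_step (survival N) x by [].
rewrite -addn1 natrD; ring.
Qed.

Lemma sum_mul_hit_at_le N x : \sum_(i < N) i%:R * hit_at i x <= k.+1%:R * D ^+ k.
Proof.
have <- : k.+1%:R / q = k.+1%:R * D ^+ k by rewrite /q exprVn invrK.
have tail_ge0 : 0 <= N%:R * survival N x by rewrite mulr_ge0 ?ler0n ?survival_ge0.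
have shift_le : \sum_(i < N) survival i.+1 x <= \sum_(i < N.+1) survival i x.
  by rewrite big_ord_recl lerDr survival_ge0.
have widen_le : \sum_(i < N.+1) survival i x <= \sum_(i < N.+1 * k.+1) survival i x.
  apply: (sum_ord_widen_le (fun i => survival i x)); last by rewrite leq_pmulr.
  by move=> i; apply: survival_ge0.
have := sum_mul_hit_atE N x; have := sum_survival N.+1 x; lra.
Qed.

End KilledWalk.

Section FirstHit.
Context (R : realType) {n : nat} (e : rel 'I_n) (v d : 'I_n).

(* [first_hit_prob] with the default element [d] of [nth] decoupled from the
   starting vertex, which changes in the recursion on the walk length. *)
Definition first_hit_weight t x : R :=
  \sum_(s : (t.+1).-tuple 'I_n |
          [&& nth d s 0 == x, nth d s t == v & [forall i : 'I_t, nth d s i != v]])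
     \prod_(i < t) trans R e (nth d s i) (nth d s i.+1).

Lemma first_hit_weight0 x : first_hit_weight 0 x = (x == v)%:R.
Proof.
rewrite /first_hit_weight; under eq_bigr do rewrite big_ord0.
have [<-|xv] := eqVneq x v.
  rewrite (big_pred1 [tuple x]) // => s /=.
  have -> : [forall i : 'I_0, nth d s i != x] by apply/forallP => -[].
  rewrite andbT andbb; case: s => [[|a [|b l]] //= s1].
  by apply/eqP/eqP => [->|/(congr1 val) [->]] //; apply: val_inj.
rewrite big_pred0 ?(negbTE xv) // => s.
by apply/negP => /and3P[/eqP s0x /eqP s0v _]; rewrite -s0x s0v eqxx in xv.
Qed.

Lemma first_hit_weightS t x :
  first_hit_weight t.+1 x = killed_step R e v (first_hit_weight t) x.
Proof.
rewrite /first_hit_weight (reindex_onto (fun s : (t.+1).-tuple 'I_n => cons_tuple x s)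
  (fun s : (t.+2).-tuple 'I_n => behead_tuple s)); last first.
  move=> s /and3P[/eqP s0 _ _]; apply: val_inj => /=.
  by case: s s0 => [[|a l] //= _] ->.
have avoid_cons (s : (t.+1).-tuple 'I_n) :
    [forall i : 'I_t.+1, nth d (cons_tuple x s) i != v] =
    (x != v) && [forall i : 'I_t, nth d s i != v].
  apply/forallP/andP => [avoid|[xv /forallP avoid]].
    by split; [exact: (avoid ord0) | apply/forallP => i; have := avoid (lift ord0 i)].
  by case=> [[|i] lt_it] /=; [exact: xv | exact: (avoid (Ordinal (lt_it : (i < t)%N)))].
rewrite (eq_bigl (fun s : (t.+1).-tuple 'I_n =>
           (x != v) && ((nth d s t == v) && [forall i : 'I_t, nth d s i != v])));
  last first.
  move=> s; rewrite avoid_cons /=.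
  have -> : behead_tuple (cons_tuple x s) == s by apply/eqP; apply: val_inj.
  by rewrite eqxx andbT /= andbCA.
rewrite /killed_step; have [xv|xv] := eqVneq x v; first by rewrite big_pred0.
under [RHS]eq_bigr do rewrite mulr_sumr.
rewrite (partition_big (fun s : (t.+1).-tuple 'I_n => nth d s 0) predT) //=.
apply: eq_bigr => y _; apply: eq_big => [s|s /andP[_ /eqP s0]]; first by rewrite andbC.
by rewrite big_ord_recl /= s0.
Qed.

Lemma first_hit_weightE t : first_hit_weight t = hit_at R e v t.
Proof.
elim: t => [|t IH]; apply: funext => x; first exact: first_hit_weight0.
by rewrite first_hit_weightS IH.
Qed.

End FirstHit.

Lemma first_hit_probE (R : realType) n (e : rel 'I_n) (w v : 'I_n) t :
  first_hit_prob R e w v t = hit_at R e v t w.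
Proof. by rewrite -(first_hit_weightE R e v w). Qed.

Theorem hitting_time_le (R : realType) n (e : rel 'I_n) (v w : 'I_n) k (D : R) :
  (forall x, exists s, [/\ path e x s, last x s = v & (size s <= k)%N]) ->
  1 <= D -> (forall x, (deg e x)%:R <= D) ->
  (hitting_time R e w v <= (k.+1%:R * D ^+ k)%:E)%E.
Proof.
move=> reach_v D_ge1 deg_le; apply: lime_le.
  apply: is_cvg_nneseries => t _ _.
  by rewrite lee_fin first_hit_probE mulr_ge0 ?ler0n ?hit_at_ge0.
apply: nearW => N; rewrite sumEFin lee_fin big_mkord.
under eq_bigr do rewrite first_hit_probE.
exact: sum_mul_hit_at_le.
Qed.

Lemma exists_deg_gt0 {n} {e : rel 'I_n} {k} :
  (1 < n)%N -> diam_le e k -> exists x, (0 < deg e x)%N.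
Proof.
move=> n_gt1 diam_k; have n_gt0 := ltnW n_gt1.
exists (Ordinal n_gt0); apply: (deg_gt0 e (Ordinal n_gt1) k) => [x|].
  exact: diam_k.
by rewrite -val_eqE.
Qed.

Lemma ln_le_mul_of_powR (R : realType) (x a p : R) :
  1 <= x -> a <= 1 -> ln x / x `^ a <= p -> ln x <= p * x.
Proof.
move=> x_ge1 a_le1 le_p.
have xa_gt0 : 0 < x `^ a by rewrite powR_gt0 // (lt_le_trans ltr01).
apply: le_trans (_ : p * x `^ a <= _); first by rewrite -ler_pdivrMr.
rewrite ler_wpM2l ?ler1_powR //; apply: le_trans le_p.
by apply: divr_ge0; [exact: ln_ge0 | exact: ltW].
Qed.

Lemma ler_of_dev_le_sqrt (R : realType) (d X L C : R) :
  0 <= C -> 0 <= L <= X -> `|d - X| <= C * Num.sqrt (X * L) -> d <= (1 + C) * X.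
Proof.
move=> C_ge0 /andP[L_ge0 le_LX]; rewrite ler_norml => /andP[_ dev_le].
have X_ge0 : 0 <= X := le_trans L_ge0 le_LX.
have : Num.sqrt (X * L) <= X.
  by rewrite -[leRHS]ger0_norm // -sqrtr_sqr ler_wsqrtr // expr2 ler_wpM2l.
move/(ler_wpM2l C_ge0); lra.
Qed.

Local Open Scope classical_set_scope.

Theorem lemma4p2 (R : realType) (k : nat) (hk : (2 <= k)%N)
  (p : nat -> R) (c C0 : R) (hc : 0 < c) (hC0 : 0 < C0)
  (hp : exists N0 : nat, forall n : nat, (N0 <= n)%N ->
     ln (n%:R : R) / powR (n%:R : R) ((k%:R - 1) / k%:R) <= p n /\
     p n <= 1 - c * (ln (n%:R : R) ^+ 4 / n%:R))
  (eps : nat -> R) (heps : eps n @[n --> \oo] --> 0) :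
  exists C : R, 0 < C /\ exists N : nat, forall n : nat, (N <= n)%N ->
    forall e : rel 'I_n, simple_graph e ->
    in_class e k (p n) C0 eps ->
    forall v w : 'I_n,
      (@hitting_time R n e w v <= (C * (p n * n%:R) ^+ k)%:E)%E.
Proof.
have [N0 p_bounds] := hp.
exists (k.+1%:R * (1 + C0) ^+ k); split.
  by rewrite mulr_gt0 ?ltr0n ?exprn_gt0 // addr_gt0.
exists (maxn N0 2) => n; rewrite geq_max => /andP[le_N0n n_ge2] e _.
move=> [[_ diam_k] deg_dev _ _ _] v w.
have n_ge1 : (1 : R) <= n%:R by rewrite ler1n ltnW.
have k_gt0 : (0 : R) < k%:R by rewrite ltr0n ltnW.
have ln_le_pn : ln n%:R <= p n * n%:R.
  apply: ln_le_mul_of_powR (p_bounds n le_N0n).1 => //.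
  by rewrite ler_pdivrMr // mul1r; lra.
have deg_le x : (deg e x)%:R <= (1 + C0) * (p n * n%:R).
  apply: ler_of_dev_le_sqrt (deg_dev x); first exact: ltW.
  by rewrite ln_le_pn ln_ge0.
have [x0 deg_x0] := exists_deg_gt0 n_ge2 diam_k.
have D_ge1 : 1 <= (1 + C0) * (p n * n%:R).
  by apply: le_trans (deg_le x0); rewrite ler1n.
by rewrite -mulrA -exprMn; apply: hitting_time_le => // x; apply: diam_k.
Qed.
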